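(* Let $n\ge3$ and $\beta=\frac n{n-2}$. For every $x\ge0$ the infinite product $\prod_{i=0}^\infty\left(1+\frac{\beta^i}{\sqrt{2\beta^i-1}}x\right)^{\beta^{-i}}$ converges, defining a continuous function $\xi(x)$ on $[0,\infty)$, and $$\xi(x)\le e^{\frac n2\cdot\frac x{1+x}}(1+x)^{n/2}\quad\text{for all }x\ge0.$$ *)

From Stdlib Require Import Reals Lra Lia.
Open Scope R_scope.

Definition beta (n : nat) : R := INR n / (INR n - 2).

Definition xi_factor (n : nat) (i : nat) (x : R) : R :=
  Rpower (1 + beta n ^ i / sqrt (2 * beta n ^ i - 1) * x) (/ beta n ^ i).

Fixpoint xi_partial (n : nat) (N : nat) (x : R) : R :=
  match N with
  | O => xi_factor n 0 x
  | S N' => xi_partial n N' x * xi_factor n (S N') x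
  end.

(* We pass to logarithms.  The i-th factor is exp (f_i x) with
     f_i y = beta^-i * ln (1 + a_i |y|),   a_i = beta^i / sqrt (2 beta^i - 1) >= 1,
   (the absolute value extends f_i to all of R, as the series toolkit requires).
   From 1 + a y <= (1 + y) exp ((a - 1) y / (1 + y)) and beta^-i a_i <= beta^(-i/2)
   we get, with t = x / (1 + x),
     0 <= f_i x <= beta^-i ln (1 + x) + (beta^(-i/2) - beta^-i) t.
   Hence the series sum_i f_i converges normally on every ball (Weierstrass test),
   so its sum S is continuous, and summing the two geometric series gives
     S x <= n/2 (ln (1 + x) - t) + t / (1 - beta^(-1/2)) <= n/2 ln (1 + x) + n/2 t,
   using 1 / (1 - 1/beta) = n/2 and 1 / (1 - beta^(-1/2)) <= n.
   The theorem follows with xi = exp o S, since the partial products are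
   exp of the partial sums. *)

From Stdlib Require Import Reals Lra.
Open Scope R_scope.

Lemma ln_le_compat x y : 0 < x -> x <= y -> ln x <= ln y.
Proof.
  intros Hx [Hlt | ->]; [left; now apply ln_increasing | lra].
Qed.

Lemma exp_le_compat x y : x <= y -> exp x <= exp y.
Proof. intros [Hlt | ->]; [left; now apply exp_increasing | lra]. Qed.

(* The elementary inequality behind the bound: for a >= 1 and y >= 0,
   1 + a y = (1 + y) (1 + (a - 1) t) <= (1 + y) exp ((a - 1) t), t = y / (1 + y). *)
Lemma ln_one_plus_scaled a y : 1 <= a -> 0 <= y ->
  ln (1 + a * y) <= ln (1 + y) + (a - 1) * (y / (1 + y)).
Proof.
  intros Ha Hy. set (t := y / (1 + y)).
  assert (Ht : 0 <= t) by (apply Rle_mult_inv_pos; lra).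
  assert (Hfactor : 1 + a * y = (1 + y) * (1 + (a - 1) * t)) by (unfold t; field; lra).
  rewrite <- (ln_exp ((a - 1) * t)), <- ln_mult by (try apply exp_pos; lra).
  apply ln_le_compat; [nra |].
  rewrite Hfactor. apply Rmult_le_compat_l; [lra | apply exp_ineq1_le].
Qed.

Lemma geometric_series_cv r : 0 <= r < 1 ->
  Un_cv (fun N => sum_f_R0 (fun i => r ^ i) N) (/ (1 - r)).
Proof.
  intros Hr eps Heps.
  destruct (GP_infinite r ltac:(rewrite Rabs_pos_eq; lra) eps Heps) as [N HN].
  exists N. intros m Hm.
  rewrite (sum_eq _ (fun i => 1 * r ^ i)) by (intros; ring). now apply HN.
Qed.

Lemma series_cv_lincomb A B u v la lb :
  Un_cv (fun N => sum_f_R0 u N) la -> Un_cv (fun N => sum_f_R0 v N) lb ->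
  Un_cv (fun N => sum_f_R0 (fun i => A * u i + B * v i) N) (A * la + B * lb).
Proof.
  intros Hu Hv.
  assert (Hconst : forall c : R, Un_cv (fun _ => c) c).
  { intros c e He. exists 0%nat. intros. rewrite Rdist_eq. lra. }
  assert (Hsum : Un_cv (fun N => A * sum_f_R0 u N + B * sum_f_R0 v N) (A * la + B * lb))
    by (apply CV_plus; apply CV_mult; auto).
  intros e He. destruct (Hsum e He) as [N HN]. exists N. intros m Hm.
  rewrite plus_sum, (sum_eq (fun i => A * u i) (fun i => u i * A)),
    (sum_eq (fun i => B * v i) (fun i => v i * B)), <- !scal_sum by (intros; ring).
  now apply HN.
Qed.

Lemma continuity_pt_limit1_in (f : R -> R) (D : R -> Prop) x :
  continuity_pt f x -> limit1_in f D (f x) x.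
Proof.
  intros Hf e He. destruct (Hf e He) as [d [Hd Hclose]]. exists d. split; [exact Hd |].
  intros y [_ Hy]. destruct (Req_dec x y) as [<- | Hne].
  - simpl. unfold Rdist. rewrite Rminus_diag, Rabs_R0. lra.
  - apply Hclose. repeat split; auto.
Qed.

Section LogFactors.
Variable b : R.
Hypothesis hb : 1 < b.

Definition coef (i : nat) : R := b ^ i / sqrt (2 * b ^ i - 1).

Definition log_factor (i : nat) (y : R) : R := / b ^ i * ln (1 + coef i * Rabs y).

Lemma pow_base_ge1 i : 1 <= b ^ i.
Proof. apply pow_R1_Rle; lra. Qed.

(* sqrt (2c - 1) <= c because (c - 1)^2 >= 0, hence a_i >= 1. *)
Lemma coef_ge1 i : 1 <= coef i.
Proof.
  pose proof (pow_base_ge1 i) as Hc. set (c := b ^ i) in *.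
  assert (Hs : 0 < sqrt (2 * c - 1)) by (apply sqrt_lt_R0; lra).
  assert (Hsc : sqrt (2 * c - 1) <= c).
  { apply Rle_trans with (sqrt (c * c)); [apply sqrt_le_1_alt; nra |].
    rewrite sqrt_square by lra. lra. }
  unfold coef. fold c. apply (Rmult_le_reg_r (sqrt (2 * c - 1))); [exact Hs |].
  unfold Rdiv. rewrite Rmult_assoc, Rinv_l by lra. lra.
Qed.

(* sqrt (2c - 1) >= sqrt c, hence beta^-i a_i <= beta^(-i/2). *)
Lemma coef_damped i : / b ^ i * coef i <= (/ sqrt b) ^ i.
Proof.
  pose proof (pow_base_ge1 i) as Hc.
  assert (Hsqrt_pow : sqrt (b ^ i) = sqrt b ^ i).
  { clear Hc. induction i as [| i IH]; simpl; [apply sqrt_1 |].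
    rewrite sqrt_mult_alt, IH by lra. reflexivity. }
  assert (Hs : 0 < sqrt (b ^ i)) by (apply sqrt_lt_R0; lra).
  unfold coef. rewrite pow_inv, <- Hsqrt_pow.
  replace (/ b ^ i * (b ^ i / sqrt (2 * b ^ i - 1))) with (/ sqrt (2 * b ^ i - 1))
    by (field; split; [apply Rgt_not_eq, sqrt_lt_R0 |]; lra).
  apply Rinv_le_contravar; [exact Hs | apply sqrt_le_1_alt; lra].
Qed.

Lemma log_factor_bound i y : 0 <= y ->
  0 <= log_factor i y /\
  log_factor i y <= (/ b) ^ i * ln (1 + y) + ((/ sqrt b) ^ i - (/ b) ^ i) * (y / (1 + y)).
Proof.
  intros Hy. pose proof (coef_ge1 i) as Ha. pose proof (coef_damped i) as Hd.
  pose proof (pow_base_ge1 i) as Hc.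
  assert (Hinv : 0 < / b ^ i) by (apply Rinv_0_lt_compat; lra).
  assert (Ht : 0 <= y / (1 + y)) by (apply Rle_mult_inv_pos; lra).
  pose proof (ln_one_plus_scaled (coef i) y Ha Hy) as Hln.
  unfold log_factor. rewrite Rabs_pos_eq, pow_inv by lra. split.
  - apply Rmult_le_pos; [lra |]. rewrite <- ln_1. apply ln_le_compat; nra.
  - apply Rle_trans with (/ b ^ i * (ln (1 + y) + (coef i - 1) * (y / (1 + y)))); nra.
Qed.

Lemma geometric_ratios : (0 <= / sqrt b < 1) /\ (0 <= / b < 1).
Proof.
  assert (Hs : 1 < sqrt b) by (rewrite <- sqrt_1; apply sqrt_lt_1_alt; lra).
  split; split; try (left; apply Rinv_0_lt_compat; lra);
    rewrite <- Rinv_1; apply Rinv_lt_contravar; lra.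
Qed.

Lemma log_factor_dominated i y r : Rabs y < r ->
  Rabs (log_factor i y) <= ln (1 + r) * (/ b) ^ i + 1 * (/ sqrt b) ^ i.
Proof.
  intros Hyr. pose proof (Rabs_pos y) as Hy.
  assert (Heven : log_factor i y = log_factor i (Rabs y))
    by (unfold log_factor; now rewrite Rabs_Rabsolu).
  destruct (log_factor_bound i (Rabs y) Hy) as [Hpos Hle].
  rewrite Heven, Rabs_pos_eq by exact Hpos.
  assert (Hln : ln (1 + Rabs y) <= ln (1 + r)) by (apply ln_le_compat; lra).
  assert (Ht : 0 <= Rabs y / (1 + Rabs y) <= 1).
  { split; [apply Rle_mult_inv_pos; lra |].
    apply Rmult_le_reg_r with (1 + Rabs y); [lra |].
    unfold Rdiv. rewrite Rmult_assoc, Rinv_l by lra. lra. }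
  destruct geometric_ratios as [Hq Hp].
  assert (0 <= (/ b) ^ i) by (apply pow_le; lra).
  assert (0 <= (/ sqrt b) ^ i) by (apply pow_le; lra).
  nra.
Qed.

Lemma log_factor_cvn : CVN_R log_factor.
Proof.
  intros r. destruct geometric_ratios as [Hq Hp].
  assert (Hlr : 0 <= ln (1 + r)).
  { rewrite <- ln_1. apply ln_le_compat; destruct r; simpl; lra. }
  exists (fun i => ln (1 + r) * (/ b) ^ i + 1 * (/ sqrt b) ^ i).
  exists (ln (1 + r) * / (1 - / b) + 1 * / (1 - / sqrt b)). split.
  - intros e He.
    destruct (series_cv_lincomb (ln (1 + r)) 1 _ _ _ _
               (geometric_series_cv _ Hp) (geometric_series_cv _ Hq) e He) as [N HN].
    exists N. intros m Hm. rewrite (sum_eq _ (fun i => ln (1 + r) * (/ b) ^ i + 1 * (/ sqrt b) ^ i)).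
    + now apply HN.
    + intros i _. apply Rabs_pos_eq.
      assert (0 <= (/ b) ^ i) by (apply pow_le; lra).
      assert (0 <= (/ sqrt b) ^ i) by (apply pow_le; lra). nra.
  - intros i y Hy. unfold Boule in Hy. rewrite Rminus_0_r in Hy.
    now apply log_factor_dominated.
Qed.

Lemma log_factor_continuous i : continuity (log_factor i).
Proof.
  intros x. pose proof (coef_ge1 i) as Ha. unfold log_factor.
  apply continuity_pt_mult; [apply continuity_pt_const; now intros ? ? |].
  apply (continuity_pt_comp (fun y => 1 + coef i * Rabs y) ln).
  - apply continuity_pt_plus; [apply continuity_pt_const; now intros ? ? |].
    apply continuity_pt_mult; [apply continuity_pt_const; now intros ? ? |].
    apply Rcontinuity_abs.
  - assert (Hpos : 0 < 1 + coef i * Rabs x) by (pose proof (Rabs_pos x); nra).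
    apply derivable_continuous_pt. exists (/ (1 + coef i * Rabs x)).
    now apply derivable_pt_lim_ln.
Qed.

Lemma log_series_bound x l : 0 <= x ->
  Un_cv (fun N => SP log_factor N x) l ->
  l <= (ln (1 + x) - x / (1 + x)) * / (1 - / b) + x / (1 + x) * / (1 - / sqrt b).
Proof.
  intros Hx Hl. destruct geometric_ratios as [Hq Hp].
  refine (Rle_cv_lim _ Hl
            (series_cv_lincomb _ _ _ _ _ _ (geometric_series_cv _ Hp)
                                           (geometric_series_cv _ Hq))).
  intros N. unfold SP. apply sum_Rle. intros i _.
  destruct (log_factor_bound i x Hx) as [_ Hle]. lra.
Qed.

End LogFactors.

Lemma INR_ge3 n : (3 <= n)%nat -> 3 <= INR n.
Proof. intros hn. replace 3 with (INR 3) by (simpl; ring). now apply le_INR. Qed.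

Lemma beta_gt1 n : (3 <= n)%nat -> 1 < beta n.
Proof.
  intros hn. pose proof (INR_ge3 n hn) as Hn.
  unfold beta. apply Rmult_lt_reg_r with (INR n - 2); [lra |].
  unfold Rdiv. rewrite Rmult_assoc, Rinv_l by lra. lra.
Qed.

Lemma beta_geometric_sum n : (3 <= n)%nat -> / (1 - / beta n) = INR n / 2.
Proof.
  intros hn. pose proof (INR_ge3 n hn) as Hn.
  unfold beta. field. lra.
Qed.

(* With s = sqrt beta: n = 2 s^2 / (s^2 - 1) = 1 / (1 - 1/s) + s / (s + 1). *)
Lemma sqrt_beta_geometric_sum_le n : (3 <= n)%nat -> / (1 - / sqrt (beta n)) <= INR n.
Proof.
  intros hn. pose proof (INR_ge3 n hn) as Hn.
  pose proof (beta_gt1 n hn) as Hb.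
  assert (Hs : 1 < sqrt (beta n)) by (rewrite <- sqrt_1; apply sqrt_lt_1_alt; lra).
  assert (Hn_beta : INR n = 2 * beta n / (beta n - 1)) by (unfold beta; field; lra).
  assert (Hsq : beta n = sqrt (beta n) * sqrt (beta n)) by (rewrite sqrt_sqrt; lra).
  rewrite Hn_beta. set (s := sqrt (beta n)) in *. rewrite Hsq.
  replace (2 * (s * s) / (s * s - 1)) with (/ (1 - / s) + s / (s + 1)) by (field; lra).
  assert (0 <= s / (s + 1)) by (apply Rle_mult_inv_pos; lra). lra.
Qed.

Lemma xi_partial_exp n N x : 0 <= x ->
  xi_partial n N x = exp (SP (log_factor (beta n)) N x).
Proof.
  intros Hx.
  assert (Hfactor : forall i, xi_factor n i x = exp (log_factor (beta n) i x)).
  { intros i. unfold xi_factor, log_factor, coef, Rpower.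
    rewrite Rabs_pos_eq by lra. reflexivity. }
  unfold SP. induction N as [| N IH]; simpl; [apply Hfactor |].
  now rewrite IH, Hfactor, exp_plus.
Qed.

Theorem lemmaB1 (n : nat) (hn : (3 <= n)%nat) :
  exists xi : R -> R,
    (forall x, 0 <= x -> Un_cv (fun N => xi_partial n N x) (xi x)) /\
    (forall x, 0 <= x -> limit1_in xi (fun y => 0 <= y) (xi x) x) /\
    (forall x, 0 <= x ->
       xi x <= exp (INR n / 2 * (x / (1 + x))) * Rpower (1 + x) (INR n / 2)).
Proof.
  pose proof (beta_gt1 n hn) as Hb.
  pose proof (log_factor_cvn _ Hb) as Hcvn.
  set (cv := CVN_R_CVS _ Hcvn).
  set (S := SFL (log_factor (beta n)) cv).
  assert (HS_cont : continuity S)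
    by (apply SFL_continuity; [exact Hcvn | apply log_factor_continuous; exact Hb]).
  assert (HS_cv : forall x, Un_cv (fun N => SP (log_factor (beta n)) N x) (S x))
    by (intros x; unfold S, SFL; destruct (cv x) as [l Hl]; exact Hl).
  assert (Hexp_cont : forall y, continuity_pt exp y)
    by (intros y; apply derivable_continuous_pt, derivable_pt_exp).
  exists (fun y => exp (S y)). split; [| split].
  - intros x Hx. apply Un_cv_ext with (fun N => exp (SP (log_factor (beta n)) N x)).
    + intros N. symmetry. now apply xi_partial_exp.
    + now apply continuity_seq.
  - intros x _. apply (continuity_pt_limit1_in (comp exp S)).
    now apply continuity_pt_comp.
  - intros x Hx. set (t := x / (1 + x)).
    assert (Ht : 0 <= t) by (apply Rle_mult_inv_pos; lra).
    pose proof (log_series_bound _ Hb x (S x) Hx (HS_cv x)) as Hbound.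
    rewrite beta_geometric_sum in Hbound by exact hn.
    pose proof (sqrt_beta_geometric_sum_le n hn) as Hsq.
    assert (t * / (1 - / sqrt (beta n)) <= t * INR n) by (apply Rmult_le_compat_l; lra).
    unfold Rpower. rewrite <- exp_plus. apply exp_le_compat. fold t in Hbound. lra.
Qed.
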